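(* Let $S\subseteq R$ be a set of long roots such that $\alpha+\beta\notin R$ for all $\alpha,\beta\in S$ and $(\gamma+R)\cap(S+S)=\emptyset$ for all $\gamma\in R\setminus S$. For $\alpha\in S$ set $\alpha^\perp=\{\gamma\in S:(\alpha,\gamma)=0\}$. Then $\#\alpha^\perp=\#\beta^\perp$ for all $\alpha,\beta\in S$.
   Context: $R$ is the root system of a complex simple Lie algebra with the form $(\cdot,\cdot)$ induced by the Killing form. $S+S=\{\alpha+\beta:\alpha,\beta\in S\}$, $\gamma+R=\{\gamma+\delta:\delta\in R\}$. *)

From HB Require Import structures.
From mathcomp Require Import all_boot all_order all_algebra.
Set Implicit Arguments. Unset Strict Implicit. Unset Printing Implicit Defensive.
Import Order.TTheory GRing.Theory Num.Theory.
Local Open Scope ring_scope.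

Definition dot (R : realFieldType) (n : nat) (u v : 'rV[R]_n) : R :=
  \sum_(i < n) u 0 i * v 0 i.

Definition is_root_system (R : realFieldType) (n : nat) (Phi : seq 'rV[R]_n) : Prop :=
  [/\
      Phi != [::] /\ 0 \notin Phi,
      (* spans R^n: the only vector orthogonal to all roots is 0 *)
      (forall v : 'rV[R]_n, (forall a, a \in Phi -> dot v a = 0) -> v = 0),
      (forall a b, a \in Phi -> b \in Phi ->
         b - ((2 * dot b a) / dot a a) *: a \in Phi),
      (forall a b, a \in Phi -> b \in Phi ->
         exists z : int, 2 * dot b a = z%:~R * dot a a) &
      (forall a (c : R), a \in Phi -> c *: a \in Phi -> c = 1 \/ c = -1)].

Definition irreducible_rs (R : realFieldType) (n : nat) (Phi : seq 'rV[R]_n) : Prop :=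
  forall P : pred 'rV[R]_n,
    (forall a b, a \in Phi -> b \in Phi -> P a -> ~~ P b -> dot a b = 0) ->
    (forall a, a \in Phi -> P a) \/ (forall a, a \in Phi -> ~~ P a).

Definition simple_root_system (R : realFieldType) (n : nat) (Phi : seq 'rV[R]_n) : Prop :=
  is_root_system Phi /\ irreducible_rs Phi.

Definition long_root (R : realFieldType) (n : nat) (Phi : seq 'rV[R]_n) (a : 'rV[R]_n) : Prop :=
  a \in Phi /\ forall b, b \in Phi -> dot b b <= dot a a.

Definition perp_in (R : realFieldType) (n : nat) (S : seq 'rV[R]_n) (a : 'rV[R]_n) : seq 'rV[R]_n :=
  [seq g <- undup S | dot a g == 0].

From HB Require Import structures.
From mathcomp Require Import all_boot all_order all_algebra ring lra.
From Stdlib Require Import ClassicalDescription.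
Import Order.TTheory GRing.Theory Num.Theory.
Local Open Scope ring_scope.
Set Implicit Arguments. Unset Strict Implicit.

(* The proof has three steps.
   1. If a, b in S and a - b is a root, the reflection in a - b maps S into
      S and exchanges a and b; being an isometry, it injects a^perp into
      b^perp (and symmetrically).
   2. Pairings with a long root are rigid, so for a, b in S with (a, b) <> 0
      we have b = a, b = -a or a - b is a root: hence #a^perp = #b^perp.
   3. By irreducibility, for orthogonal a, b in S some root r pairs
      positively with both; the hypotheses on S force r in S, so a and b are
      linked through r and step 2 applies twice. *)

Section InnerProduct.
Variables (R : realFieldType) (n : nat).
Implicit Types u v w : 'rV[R]_n.

Lemma dotC u v : dot u v = dot v u.
Proof. by apply: eq_bigr => i _; rewrite mulrC. Qed.

Lemma dotDl u v w : dot (u + v) w = dot u w + dot v w.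
Proof. by rewrite /dot -big_split; apply: eq_bigr => i _; rewrite mxE mulrDl. Qed.

Lemma dotZl c u v : dot (c *: u) v = c * dot u v.
Proof. by rewrite /dot mulr_sumr; apply: eq_bigr => i _; rewrite mxE mulrA. Qed.

Lemma dotNl u v : dot (- u) v = - dot u v.
Proof. by rewrite -scaleN1r dotZl mulN1r. Qed.

Lemma dotBl u v w : dot (u - v) w = dot u w - dot v w.
Proof. by rewrite dotDl dotNl. Qed.

Lemma dotZr c u v : dot v (c *: u) = c * dot v u.
Proof. by rewrite dotC dotZl dotC. Qed.

Lemma dotBr u v w : dot w (u - v) = dot w u - dot w v.
Proof. by rewrite dotC dotBl !(dotC w). Qed.

Lemma dot_ge0 u : 0 <= dot u u.
Proof. by apply: sumr_ge0 => i _; rewrite -expr2 sqr_ge0. Qed.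

Lemma dot_eq0 u : (dot u u == 0) = (u == 0).
Proof.
apply/idP/eqP => [|->]; last by rewrite /dot big1 // => i _; rewrite mxE mul0r.
rewrite psumr_eq0 => [/allP u0|i _]; last by rewrite -expr2 sqr_ge0.
apply/rowP => i; rewrite mxE.
by have := u0 i (mem_index_enum _); rewrite mulf_eq0 orbb => /eqP.
Qed.

Lemma dot_gt0 u : u != 0 -> 0 < dot u u.
Proof. by move=> u0; rewrite lt_def dot_eq0 u0 dot_ge0. Qed.

Lemma dotBB u v : dot (u - v) (u - v) = dot u u + dot v v - 2 * dot u v.
Proof. rewrite dotBl !dotBr (dotC v u); ring. Qed.

End InnerProduct.

Definition reflection (R : realFieldType) (n : nat) (t v : 'rV[R]_n) : 'rV[R]_n :=
  v - (2 * dot v t / dot t t) *: t.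

Section Reflection.
Variables (R : realFieldType) (n : nat) (t : 'rV[R]_n).
Hypothesis t_neq0 : t != 0.
Implicit Types u v : 'rV[R]_n.

Let tt_neq0 : dot t t != 0. Proof. by rewrite dot_eq0. Qed.

(* A reflection is self-adjoint, hence (being an involution) an isometry. *)
Lemma reflection_adjoint u v : dot u (reflection t v) = dot (reflection t u) v.
Proof. rewrite /reflection dotBr dotBl dotZr dotZl (dotC t v) (dotC u t); ring. Qed.

Lemma reflection_axis v : dot (reflection t v) t = - dot v t.
Proof. rewrite /reflection dotBl dotZl divfK //; ring. Qed.

Lemma reflectionK : involutive (reflection t).
Proof.
move=> v; rewrite {1}/reflection reflection_axis /reflection.
by rewrite mulrN mulNr scaleNr opprK subrK.
Qed.

Lemma reflection_fix v : dot v t = 0 -> reflection t v = v.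
Proof. by move=> vt; rewrite /reflection vt mulr0 mul0r scale0r subr0. Qed.

Lemma reflection_dot_orth u v : dot t u = 0 -> dot (reflection t v) u = dot v u.
Proof. by move=> tu; rewrite /reflection dotBl dotZl tu mulr0 subr0. Qed.

Lemma reflection_sub v : 2 * dot v t = dot t t -> reflection t v = v - t.
Proof. by move=> vt; rewrite /reflection vt divff // scale1r. Qed.

Lemma reflection_add v : 2 * dot v t = - dot t t -> reflection t v = v + t.
Proof. by move=> vt; rewrite /reflection vt mulNr divff // scaleN1r opprK. Qed.

End Reflection.

Lemma reflection_swap (R : realFieldType) (n : nat) (a b : 'rV[R]_n) :
  dot a a = dot b b -> a != b -> reflection (a - b) a = b.
Proof.
move=> ab a_neq_b; rewrite reflection_sub ?subr_eq0 //; first by rewrite opprB addrC subrK.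
by rewrite dotBB dotBr -ab; ring.
Qed.

Section RootSystem.
Variables (R : realFieldType) (n : nat) (Phi : seq 'rV[R]_n).
Hypothesis hR : is_root_system Phi.

Lemma root_neq0 a : a \in Phi -> a != 0.
Proof. by case: hR => [[_ Phi0] _ _ _ _] aP; apply: contraNneq Phi0 => <-. Qed.

Lemma root_norm_gt0 a : a \in Phi -> 0 < dot a a.
Proof. by move=> /root_neq0; apply: dot_gt0. Qed.

Lemma reflection_root a b : a \in Phi -> b \in Phi -> reflection a b \in Phi.
Proof. by case: hR => _ _ Hr _ _; apply: Hr. Qed.

Lemma rootN a : a \in Phi -> - a \in Phi.
Proof.
move=> aP; have := reflection_root aP aP.
rewrite /reflection mulfK ?gt_eqF ?root_norm_gt0 // scaler_nat mulr2n.
by rewrite opprD addrA subrr add0r.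
Qed.

Lemma long_pairing r a :
  r \in Phi -> a \in Phi -> dot r r <= dot a a -> 0 < dot r a ->
  r = a \/ 2 * dot r a = dot a a.
Proof.
move=> rP aP r_le_a ra_gt0.
have aa_gt0 := root_norm_gt0 aP.
have [_ _ _ Hc _] := hR; have [z cartan] := Hc a r aP rP.
have ar_ge0 := dot_ge0 (a - r); rewrite dotBB (dotC a r) in ar_ge0.
have z_gt0 : 0 < z by rewrite -(ltr0z R) -(pmulr_lgt0 _ aa_gt0) -cartan; lra.
have z_le2 : z <= 2 by rewrite -(ler_int R) -(ler_pM2r aa_gt0) -cartan; lra.
case: z z_gt0 z_le2 cartan => [[|[|[|k]]]|k] //= _ _ cartan.
  by right; rewrite cartan mul1r.
left; apply/eqP; rewrite eq_sym -subr_eq0 -dot_eq0 eq_le dot_ge0 andbT.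
by rewrite dotBB (dotC a r) cartan; lra.
Qed.

(* A chain of pairwise non-orthogonal roots a, x1, ..., xk (k >= 1) can be
   shortened, reflecting its middle links away, to one of length two. *)
Lemma nonorth_chain_shortcut l a :
  a \in Phi -> all (mem Phi) l -> path (fun x y => dot x y != 0) a l -> l != [::] ->
  exists r, [/\ r \in Phi, dot a r != 0 & dot r (last a l) != 0].
Proof.
elim: {l}(size l) {-2}l (leqnn (size l)) a => [|k IH] [|x [|y [|z l]]] //= size_l a aP.
- move=> /andP[xP _] /andP[ax _] _; exists a; split => //.
  by rewrite gt_eqF // root_norm_gt0.
- by move=> /and3P[xP yP _] /and3P[ax xy _] _; exists x.
move=> /and4P[xP yP zP lP] /and4P[ax xy yz zl] _; rewrite !ltnS in size_l.
have IHk u : u \in Phi -> dot a u != 0 -> dot u z != 0 ->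
    exists r, [/\ r \in Phi, dot a r != 0 & dot r (last z l) != 0].
  move=> uP au uz; apply: (IH (u :: z :: l)) => //=.
    by rewrite uP zP lP.
  by rewrite au uz zl.
have [ay|/negPn/eqP ay] := boolP (dot a y != 0); first exact: IHk yP ay yz.
have [xz|/negPn/eqP xz] := boolP (dot x z != 0); first exact: IHk xP ax xz.
(* Otherwise a is orthogonal to y and x to z: replace y by its reflection
   in x, which still meets a and z non-orthogonally. *)
have x_neq0 := root_neq0 xP; have xx_gt0 := root_norm_gt0 xP.
apply: (IHk (reflection x y)); first exact: reflection_root.
  rewrite /reflection dotBr dotZr ay sub0r oppr_eq0 (dotC y x).
  by rewrite !mulf_eq0 invr_eq0 (negPf ax) (negPf xy) (gt_eqF xx_gt0) !orbF pnatr_eq0.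
by rewrite reflection_dot_orth // dotC.
Qed.

(* Given orthogonal roots a, b and a root pairing non-trivially with both,
   the reflections in a and b adjust the signs of the two pairings
   independently. *)
Lemma positive_bridge a b r :
  a \in Phi -> b \in Phi -> dot a b = 0 -> r \in Phi ->
  dot r a != 0 -> dot r b != 0 ->
  exists2 r', r' \in Phi & 0 < dot r' a /\ 0 < dot r' b.
Proof.
move=> aP bP ab rP ra rb.
have flip c v : c \in Phi -> v \in Phi -> dot v c != 0 ->
    exists2 v', v' \in Phi & 0 < dot v' c /\ (forall u, dot c u = 0 -> dot v' u = dot v u).
  move=> cP vP vc; have c0 := root_neq0 cP.
  have [vc_lt0|vc_gt0|/eqP] := ltgtP (dot v c) 0; last by rewrite (negPf vc).
    exists (reflection c v); first exact: reflection_root.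
    by split=> [|u cu]; rewrite ?reflection_axis ?oppr_gt0 ?reflection_dot_orth.
  by exists v.
have [r1 r1P [r1a r1_b]] := flip a r aP rP ra.
have r1b : dot r1 b != 0 by rewrite r1_b.
have [r2 r2P [r2b r2_a]] := flip b r1 bP r1P r1b.
by exists r2 => //; rewrite r2_a // dotC.
Qed.

End RootSystem.

(* In an irreducible root system any two roots are joined by a chain of
   pairwise non-orthogonal roots: the roots reachable from a are orthogonal
   to the unreachable ones, so irreducibility makes every root reachable. *)
Lemma nonorth_chain (R : realFieldType) (n : nat) (Phi : seq 'rV[R]_n) a b :
  irreducible_rs Phi -> a \in Phi -> b \in Phi ->
  exists2 l, all (mem Phi) l /\ path (fun x y => dot x y != 0) a l & last a l = b.
Proof.
move=> hI aP bP.
pose reach v := exists2 l, all (mem Phi) l /\ path (fun x y => dot x y != 0) a l & last a l = v.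
pose P : pred 'rV[R]_n := fun v => if excluded_middle_informative (reach v) then true else false.
have PP v : reflect (reach v) (P v).
  by rewrite /P; case: excluded_middle_informative => ?; constructor.
have [/(_ b bP)/PP //|/(_ a aP)/PP[]] : (forall v, v \in Phi -> P v) \/ (forall v, v \in Phi -> ~~ P v).
  apply: hI => x y xP yP /PP[l [lP pl] xl]; apply: contraNeq => xy; apply/PP.
  exists (rcons l y); last by rewrite last_rcons.
  by split; [rewrite all_rcons /= yP | rewrite rcons_path pl xl /=].
by exists [::].
Qed.

Lemma common_nonorth_root (R : realFieldType) (n : nat) (Phi : seq 'rV[R]_n) a b :
  simple_root_system Phi -> a \in Phi -> b \in Phi ->
  exists r, [/\ r \in Phi, dot a r != 0 & dot r b != 0].
Proof.
move=> [hR hI] aP bP; have [l [lP pl] <-] := nonorth_chain hI aP bP.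
have [->|l_nil] := eqVneq l [::]; last exact: nonorth_chain_shortcut.
by exists a; rewrite aP gt_eqF // (root_norm_gt0 hR).
Qed.

Section LongRootFamily.
Variables (R : realFieldType) (n : nat) (Phi S : seq 'rV[R]_n).
Hypothesis hR : is_root_system Phi.
Hypothesis hI : irreducible_rs Phi.
Hypothesis S_long : forall a, a \in S -> long_root Phi a.
Hypothesis S_sum : forall a b, a \in S -> b \in S -> a + b \notin Phi.
Hypothesis S_sep : forall g, g \in Phi -> g \notin S ->
  forall d a b, d \in Phi -> a \in S -> b \in S -> g + d != a + b.

Lemma S_root a : a \in S -> a \in Phi.
Proof. by case/S_long. Qed.

Lemma S_norm a b : a \in S -> b \in S -> dot a a = dot b b.
Proof. by move=> /S_long[aP aM] /S_long[bP bM]; apply/le_anti; rewrite aM ?bM. Qed.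

(* Step 1: if a, b in S and a - b is a root, the reflection in a - b maps S
   into S.  Each case where the image leaves S produces a forbidden
   decomposition of an element of S + S. *)
Lemma reflection_stable a b g : a \in S -> b \in S -> 2 * dot a b = dot a a ->
  g \in S -> reflection (a - b) g \in S.
Proof.
move=> aS bS ab gS; have [aP bP] := (S_root aS, S_root bS).
have tP : a - b \in Phi.
  have := reflection_root hR bP aP.
  by rewrite (reflection_sub (root_neq0 hR bP)) // -(S_norm aS bS).
set t := a - b in tP *.
have tt : dot t t = dot g g by rewrite dotBB -(S_norm aS bS) ab -(S_norm aS gS); ring.
have t0 := root_neq0 hR tP; have [gP g_long] := S_long gS.
have sgP : reflection t g \in Phi by exact: reflection_root.
have [tg_lt0|tg_gt0|tg] := ltgtP (dot t g) 0; last by rewrite reflection_fix // dotC tg.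
(* (t, g) < 0: either g = b - a, or s_t(g) = g + t and (g + t) + b = g + a. *)
- have ntP := rootN hR tP.
  have ntg_gt0 : 0 < dot (- t) g by rewrite dotNl oppr_gt0.
  have [gE|ntg] := long_pairing hR ntP gP (g_long _ ntP) ntg_gt0.
    by have := S_sum gS aS; rewrite -gE /t opprB subrK bP.
  have sgE : reflection t g = g + t by apply: (reflection_add t0); rewrite tt dotC -ntg dotNl; ring.
  apply: contraT => sgNS; have := S_sep sgP sgNS bP gS aS.
  by rewrite sgE /t addrA subrK eqxx.
(* (t, g) > 0: either g = a - b, or s_t(g) = g - t and (g - t) + a = g + b. *)
- have [gE|tg2] := long_pairing hR tP gP (g_long _ tP) tg_gt0.
    by have := S_sum gS bS; rewrite -gE /t subrK aP.
  have sgE : reflection t g = g - t by apply: (reflection_sub t0); rewrite tt dotC -tg2.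
  apply: contraT => sgNS; have := S_sep sgP sgNS aP gS bS.
  by rewrite sgE /t opprB addrA subrK eqxx.
Qed.

(* Consequently, the reflection in a - b (which swaps a and b and preserves
   pairings) injects a^perp into b^perp. *)
Lemma perp_size_le a b : a \in S -> b \in S -> 2 * dot a b = dot a a ->
  (size (perp_in S a) <= size (perp_in S b))%N.
Proof.
move=> aS bS ab; have ab_norm := S_norm aS bS.
have a_neq_b : a != b.
  apply/eqP => a_eq_b; have := root_norm_gt0 hR (S_root aS).
  by move: ab; rewrite a_eq_b; lra.
have t0 : a - b != 0 by rewrite subr_eq0.
rewrite -(size_map (reflection (a - b))) uniq_leq_size //.
  by rewrite (map_inj_uniq (can_inj (reflectionK t0))) filter_uniq ?undup_uniq.
move=> x /mapP[g]; rewrite !mem_filter !mem_undup => /andP[ag gS] ->.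
have swap_b : reflection (a - b) b = a.
  by rewrite -[RHS](reflectionK t0 a) reflection_swap.
by rewrite reflection_stable // andbT reflection_adjoint swap_b.
Qed.

Lemma perp_in_opp a : perp_in S (- a) = perp_in S a.
Proof. by apply: eq_filter => g; rewrite dotNl oppr_eq0. Qed.

(* Step 2: elements of S that are not orthogonal have orthogonal sets of
   the same size; by rigidity, b = a, b = -a, or a - b is a root. *)
Lemma perp_size_nonorth a b : a \in S -> b \in S -> dot a b != 0 ->
  size (perp_in S a) = size (perp_in S b).
Proof.
move=> aS bS ab; have [aP bP] := (S_root aS, S_root bS); have [_ a_long] := S_long aS.
have [ba_lt0|ba_gt0|/eqP] := ltgtP (dot b a) 0; last by rewrite dotC (negPf ab).
  have nbP := rootN hR bP.
  have nba_gt0 : 0 < dot (- b) a by rewrite dotNl oppr_gt0.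
  have [<-|nba] := long_pairing hR nbP aP (a_long _ nbP) nba_gt0.
    by rewrite perp_in_opp.
  have sb : reflection a b = b + a.
    by apply: (reflection_add (root_neq0 hR aP)); rewrite -nba dotNl; ring.
  by have := reflection_root hR aP bP; rewrite sb addrC (negPf (S_sum aS bS)).
have [->|ba2] := long_pairing hR bP aP (a_long _ bP) ba_gt0; first by [].
have ab2 : 2 * dot a b = dot a a by rewrite dotC.
have ba2' : 2 * dot b a = dot b b by rewrite -(S_norm aS bS).
by apply/eqP; rewrite eqn_leq !perp_size_le.
Qed.

(* A root r pairing positively with a and b has <r, a> = <r, b> = 1, so
   r - a and then r - a - b are roots; if r were outside S, the root
   a + b - r would give the forbidden decomposition r + (a + b - r). *)
Lemma common_nonorth_S a b :
  a \in S -> b \in S -> dot a b = 0 ->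
  exists c, [/\ c \in S, dot a c != 0 & dot c b != 0].
Proof.
move=> aS bS ab; have [aP bP] := (S_root aS, S_root bS).
have [[_ a_long] [_ b_long]] := (S_long aS, S_long bS).
have [r0 [r0P ar0 r0b]] := common_nonorth_root (conj hR hI) aP bP.
have r0a : dot r0 a != 0 by rewrite dotC.
have [r rP [ra rb]] := positive_bridge hR aP bP ab r0P r0a r0b.
have [ra_eq|ra2] := long_pairing hR rP aP (a_long _ rP) ra.
  by move: rb; rewrite ra_eq ab ltxx.
have [rb_eq|rb2] := long_pairing hR rP bP (b_long _ rP) rb.
  by move: ra; rewrite rb_eq dotC ab ltxx.
have [rS|rNS] := boolP (r \in S).
  by exists r; rewrite rS (dotC a) !gt_eqF.
have raP : r - a \in Phi.
  by have := reflection_root hR aP rP; rewrite (reflection_sub (root_neq0 hR aP)).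
have rabP : r - a - b \in Phi.
  have := reflection_root hR bP raP; rewrite (reflection_sub (root_neq0 hR bP)) //.
  by rewrite dotBl ab subr0.
have := S_sep rP rNS (rootN hR rabP) aS bS.
by rewrite !opprB addrCA (addrC r) subrK addrC eqxx.
Qed.

End LongRootFamily.

Theorem mainTheorem17 (R : realFieldType) (n : nat) (Phi S : seq 'rV[R]_n) :
  simple_root_system Phi ->
  (forall a, a \in S -> long_root Phi a) ->
  (forall a b, a \in S -> b \in S -> a + b \notin Phi) ->
  (forall g, g \in Phi -> g \notin S ->
     forall d a b, d \in Phi -> a \in S -> b \in S -> g + d != a + b) ->
  forall a b, a \in S -> b \in S -> size (perp_in S a) = size (perp_in S b).
Proof.
move=> [hR hI] S_long S_sum S_sep a b aS bS.
have perp_eq := perp_size_nonorth hR S_long S_sum S_sep.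
have [/eqP ab|ab] := boolP (dot a b == 0); last exact: perp_eq.
have [c [cS ac cb]] := common_nonorth_S hR hI S_long S_sep aS bS ab.
by rewrite (perp_eq _ _ aS cS ac) (perp_eq _ _ cS bS cb).
Qed.
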